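(* Let $D(a_0,a_1,a_2;p)=\sum_{k=0}^2\binom{2}{k}p^k(1-p)^{2-k}|p-a_k|$, let $(a_0,a_1,a_2)\in[0,1]^3$ minimize $\max_{p\in[0,1]}D(x_0,x_1,x_2;p)$ over $[0,1]^3$, and let $f(p)=D(a_0,a_1,a_2;p)$. Then $f(0)=f(1)=\|f\|_\infty$, i.e. $\{0,1\}\subset M(f)=\{x\in[0,1]:f(x)=\|f\|_\infty\}$. *)

From HB Require Import structures.
From mathcomp Require Import all_boot all_order all_algebra.
From mathcomp Require Import all_classical all_reals.
Set Implicit Arguments. Unset Strict Implicit. Unset Printing Implicit Defensive.
Import Order.TTheory GRing.Theory Num.Theory.
Local Open Scope classical_set_scope.
Local Open Scope ring_scope.

Definition unit_itv (R : realType) : set R := [set p : R | 0 <= p <= 1].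
Arguments unit_itv R : clear implicits.

Definition Dfun (R : realType) (a0 a1 a2 p : R) : R :=
  \sum_(k < 3) ('C(2, k))%:R * p ^+ k * (1 - p) ^+ (2 - k)
               * `|p - [:: a0; a1; a2]`_k|.

Definition maxD (R : realType) (a0 a1 a2 : R) : R :=
  sup [set Dfun a0 a1 a2 p | p in unit_itv R].

Definition supnorm01 (R : realType) (f : R -> R) : R :=
  sup [set `|f p| | p in unit_itv R].

(** For every choice of the a_k and every 0 <= t <= 1/2, choosing the sign of
    each absolute value so that the a_k cancel gives the polynomial lower bound
    [Dlow t <= D(1/2+t) + D(1/2-t) + (1/2 + 2t^2)(D(0) + D(1))].  Bounding the
    middle terms by max D shows that b := sup_t Dlow t / (3 + 4t^2) is at most
    max D - (2 max D - D(0) - D(1))/6.  Conversely the choice (b, 1/2, 1 - b)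
    achieves max D <= b, so at a minimiser 2 max D <= D(0) + D(1), and since
    both endpoint values are at most max D they are equal to it. *)

From HB Require Import structures.
From mathcomp Require Import all_boot all_order all_algebra.
From mathcomp Require Import all_classical all_reals.
From mathcomp Require Import ring lra.
Import Order.TTheory GRing.Theory Num.Theory.
Set Implicit Arguments. Unset Strict Implicit.
Local Open Scope classical_set_scope.
Local Open Scope ring_scope.

Section MinimaxD.
Variable R : realType.
Implicit Types c p t : R.

Lemma DfunE (a0 a1 a2 : R) p : Dfun a0 a1 a2 p =
  (1 - p) ^+ 2 * `|p - a0| + 2 * p * (1 - p) * `|p - a1| + p ^+ 2 * `|p - a2|.
Proof.
rewrite /Dfun !big_ord_recr big_ord0 /= add0r !expr0 !expr1 !mulr1 !mul1r.
by rewrite subn0 (_ : 'C(2, 1) = 2)%N.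
Qed.

Lemma Dfun_ge0 (a0 a1 a2 : R) p : 0 <= p <= 1 -> 0 <= Dfun a0 a1 a2 p.
Proof.
move=> /andP[p0 p1]; rewrite DfunE.
have w1 : 0 <= 2 * p * (1 - p) by apply: mulr_ge0; lra.
have := mulr_ge0 (sqr_ge0 (1 - p)) (normr_ge0 (p - a0)).
have := mulr_ge0 w1 (normr_ge0 (p - a1)).
have := mulr_ge0 (sqr_ge0 p) (normr_ge0 (p - a2)).
lra.
Qed.

Lemma Dfun_le1 (a0 a1 a2 : R) p : 0 <= a0 <= 1 -> 0 <= a1 <= 1 -> 0 <= a2 <= 1 ->
  0 <= p <= 1 -> Dfun a0 a1 a2 p <= 1.
Proof.
move=> a0P a1P a2P /andP[p0 p1]; rewrite DfunE.
have dist_le1 (a : R) : 0 <= a <= 1 -> `|p - a| <= 1.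
  by move=> /andP[? ?]; rewrite ler_norml; apply/andP; split; lra.
have w1 : 0 <= 2 * p * (1 - p) by apply: mulr_ge0; lra.
have := ler_wpM2l (sqr_ge0 (1 - p)) (dist_le1 _ a0P).
have := ler_wpM2l w1 (dist_le1 _ a1P).
have := ler_wpM2l (sqr_ge0 p) (dist_le1 _ a2P).
lra.
Qed.

Lemma maxD_le (a0 a1 a2 : R) c :
  (forall p, 0 <= p <= 1 -> Dfun a0 a1 a2 p <= c) -> maxD a0 a1 a2 <= c.
Proof.
move=> Dc; apply: ge_sup; first by exists (Dfun a0 a1 a2 0), 0; rewrite /unit_itv /=; lra.
by move=> _ [p pP <-]; exact: Dc.
Qed.

Lemma Dfun_le_maxD (a0 a1 a2 : R) p : 0 <= a0 <= 1 -> 0 <= a1 <= 1 -> 0 <= a2 <= 1 ->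
  0 <= p <= 1 -> Dfun a0 a1 a2 p <= maxD a0 a1 a2.
Proof.
move=> a0P a1P a2P pP; apply: sup_upper_bound; last by exists p.
split; first by exists (Dfun a0 a1 a2 p), p.
by exists 1 => _ [q qP <-]; exact: Dfun_le1.
Qed.

Lemma supnorm01_Dfun (a0 a1 a2 : R) : supnorm01 (Dfun a0 a1 a2) = maxD a0 a1 a2.
Proof.
rewrite /supnorm01 (eq_imagel (f' := Dfun a0 a1 a2)) // => p pP.
by rewrite ger0_norm ?Dfun_ge0.
Qed.

Definition Dlow t : R := 2^-1 + t - 2 * t ^+ 2 - 4 * t ^+ 3.

Lemma Dlow_le_Dfun (a0 a1 a2 : R) t : 0 <= t <= 2^-1 ->
  Dlow t <= (2^-1 + 2 * t ^+ 2) * (Dfun a0 a1 a2 0 + Dfun a0 a1 a2 1)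
            + Dfun a0 a1 a2 (2^-1 + t) + Dfun a0 a1 a2 (2^-1 - t).
Proof.
move=> /andP[t0 t1]; rewrite !DfunE.
set q := 2^-1 + t; set r := 2^-1 - t.
have ge_opp (x : R) : - x <= `|x| by rewrite -normrN ler_norm.
have w : 0 <= 2 * q * (1 - q) by rewrite /q; nra.
have -> : 2 * r * (1 - r) = 2 * q * (1 - q) by rewrite /q /r; field.
have := ler_wpM2l (sqr_ge0 (1 - q)) (ler_norm (q - a0)).
have := ler_wpM2l (sqr_ge0 q) (ge_opp (q - a2)).
have := ler_wpM2l (sqr_ge0 (1 - r)) (ler_norm (r - a0)).
have := ler_wpM2l (sqr_ge0 r) (ge_opp (r - a2)).
have := ler_wpM2l w (ler_norm (q - a1)).
have := ler_wpM2l w (ge_opp (r - a1)).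
have w' : 0 <= 2^-1 + 2 * t ^+ 2 :> R by have := sqr_ge0 t; lra.
have := ler_wpM2l w' (lerD (ge_opp (0 - a0)) (ler_norm (1 - a2))).
rewrite /Dlow /q /r; lra.
Qed.

Let half_gt0 : 0 < 2^-1 :> R.
Proof. by rewrite invr_gt0. Qed.

Let den_gt0 t : 0 < 3 + 4 * t ^+ 2.
Proof. by have := sqr_ge0 t; lra. Qed.

Definition minmaxD : R :=
  sup [set Dlow t / (3 + 4 * t ^+ 2) | t in [set t : R | 0 <= t <= 2^-1]].

Lemma minmaxD_le c :
  (forall t, 0 <= t <= 2^-1 -> Dlow t <= c * (3 + 4 * t ^+ 2)) -> minmaxD <= c.
Proof.
move=> Dc; apply: ge_sup.
  by exists (Dlow 0 / (3 + 4 * 0 ^+ 2)), 0 => //=; lra.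
by move=> _ [t tP <-]; rewrite ler_pdivrMr // Dc.
Qed.

Lemma Dlow_le_minmaxD t : 0 <= t <= 2^-1 -> Dlow t <= minmaxD * (3 + 4 * t ^+ 2).
Proof.
move=> tP; rewrite -ler_pdivrMr //; apply: sup_upper_bound; last by exists t.
split; first by exists (Dlow t / (3 + 4 * t ^+ 2)), t.
exists 2^-1; apply/ubP => _ [s /andP[s0 s1] <-]; rewrite ler_pdivrMr //.
by have := sqr_ge0 s; have := exprn_ge0 3 s0; rewrite /Dlow; lra.
Qed.

Lemma minmaxD_ge0 : 0 <= minmaxD.
Proof. by have := @Dlow_le_minmaxD 0; rewrite /Dlow; lra. Qed.

Lemma minmaxD_le_half : minmaxD <= 2^-1.
Proof.
apply: minmaxD_le => t /andP[t0 t1].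
by have := sqr_ge0 t; have := exprn_ge0 3 t0; rewrite /Dlow; lra.
Qed.

(* For minmaxD <= p = 1/2 +- t <= 1 - minmaxD one has
   D(p) - minmaxD = (Dlow t - minmaxD * (3 + 4 t^2)) / 2. *)
Lemma Dfun_minmax_config p : 0 <= p <= 1 ->
  Dfun minmaxD 2^-1 (1 - minmaxD) p <= minmaxD.
Proof.
move=> /andP[p0 p1]; rewrite DfunE.
have b0 := minmaxD_ge0; have bh := minmaxD_le_half.
case: (lerP p minmaxD) => [pb|bp].
  rewrite !ler0_norm ?subr_le0; try lra.
  by have := mulr_ge0 p0 b0; lra.
case: (lerP p 2^-1) => [ph|hp].
  have := @Dlow_le_minmaxD (2^-1 - p) ltac:(apply/andP; split; lra).
  by rewrite /Dlow (ler0_norm (_ : p - (1 - minmaxD) <= 0)) ?subr_le0; lra.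
case: (lerP p (1 - minmaxD)) => [pb'|bp'].
  have := @Dlow_le_minmaxD (p - 2^-1) ltac:(apply/andP; split; lra).
  by rewrite /Dlow; lra.
have : 0 <= 1 - p by lra.
by move=> /mulr_ge0 /(_ b0); lra.
Qed.

Lemma maxD_minmax_config : maxD minmaxD 2^-1 (1 - minmaxD) <= minmaxD.
Proof. exact/maxD_le/Dfun_minmax_config. Qed.

Lemma minmaxD_le_maxD (a0 a1 a2 : R) : 0 <= a0 <= 1 -> 0 <= a1 <= 1 -> 0 <= a2 <= 1 ->
  minmaxD <= maxD a0 a1 a2
             - (2 * maxD a0 a1 a2 - (Dfun a0 a1 a2 0 + Dfun a0 a1 a2 1)) / 6.
Proof.
move=> a0P a1P a2P; set m := maxD _ _ _.
have Dm p : 0 <= p <= 1 -> Dfun a0 a1 a2 p <= m by exact: Dfun_le_maxD.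
have F2m : Dfun a0 a1 a2 0 + Dfun a0 a1 a2 1 <= 2 * m.
  by have := Dm 0 ltac:(lra); have := Dm 1 ltac:(lra); lra.
apply: minmaxD_le => t /andP[t0 t1].
have := Dlow_le_Dfun a0 a1 a2 (ltac:(lra) : 0 <= t <= 2^-1).
have := Dm (2^-1 + t) ltac:(lra); have := Dm (2^-1 - t) ltac:(lra).
have : 0 <= (2 * m - (Dfun a0 a1 a2 0 + Dfun a0 a1 a2 1)) * t ^+ 2.
  by apply: mulr_ge0 (sqr_ge0 t); rewrite subr_ge0.
lra.
Qed.

End MinimaxD.

Theorem lemma5p4 (R : realType) (a0 a1 a2 : R) :
  a0 \in unit_itv R -> a1 \in unit_itv R -> a2 \in unit_itv R ->
  (forall x0 x1 x2 : R,
      x0 \in unit_itv R -> x1 \in unit_itv R -> x2 \in unit_itv R ->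
      maxD a0 a1 a2 <= maxD x0 x1 x2) ->
  let f := Dfun a0 a1 a2 in
  f 0 = supnorm01 f /\ f 1 = supnorm01 f.
Proof.
rewrite !in_setE /unit_itv /= => a0P a1P a2P minimal /=.
rewrite supnorm01_Dfun; set m := maxD a0 a1 a2.
have b0 := minmaxD_ge0 R; have bh := minmaxD_le_half R.
have m_le_b : m <= minmaxD R.
  apply: le_trans (maxD_minmax_config R); apply: minimal; rewrite in_setE /=; lra.
have := minmaxD_le_maxD a0P a1P a2P; rewrite -/m.
have := Dfun_le_maxD a0P a1P a2P (ltac:(lra) : 0 <= (0 : R) <= 1).
have := Dfun_le_maxD a0P a1P a2P (ltac:(lra) : 0 <= (1 : R) <= 1).
rewrite -/m => D1 D0 b_le; split; apply/eqP; rewrite eq_le; apply/andP; split; lra.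
Qed.
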